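(* Let $n\ge2$, $\Delta\subset B_n$ a proper ideal, and let $\Delta^{\mathrm{aug}}$ denote the same family $\Delta$ regarded as a proper ideal of $B_{n+1}$. Then for $0\le i\le n$, $$h_i(\mathrm{Bier}(B_{n+1},\Delta^{\mathrm{aug}}))=h_{i-1}(\mathrm{Bier}(B_n,\Delta))+f_i(\Delta),$$ with the convention $h_{-1}=0$.
   Context: $B_m$ is the Boolean lattice of subsets of $[1,m]$. A proper ideal $\Delta\subset B_m$ is a nonempty family of subsets of $[1,m]$ closed under taking subsets with $[1,m]\notin\Delta$; $f_i(\Delta)$ is the number of sets of cardinality $i$ in $\Delta$. The Bier sphere $\mathrm{Bier}(B_m,\Delta)$ is the simplicial complex whose faces are the pairs $(B,C)$ with $B\subsetneq C\subseteq[1,m]$, $B\in\Delta$, $C\notin\Delta$, with $(B',C')$ a face of $(B,C)$ iff $B'\subseteq B$ and $C\subseteq C'$; the face $(B,C)$ has $|B|+m-|C|$ vertices, and all facets have $m-1$ vertices. For such a complex $\Gamma$, $f_j(\Gamma)$ is the number of faces with $j$ vertices ($f_0=1$) and $h_i(\Gamma):=\sum_{j=0}^{m-1}(-1)^{i+j}\binom{m-1-j}{m-1-i}f_j(\Gamma)$ for $0\le i\le m-1$, and $h_i:=0$ otherwise. *)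

(* Subsets of [1,m] are modelled as {set 'I_m} (element k+1 <-> ordinal k). *)
From mathcomp Require Import all_boot all_order all_algebra.
Set Implicit Arguments. Unset Strict Implicit. Unset Printing Implicit Defensive.
Import GRing.Theory Num.Theory.
Local Open Scope ring_scope.

Definition is_proper_ideal (m : nat) (D : {set {set 'I_m}}) : Prop :=
  [/\ D != set0,
      (forall A B : {set 'I_m}, B \subset A -> A \in D -> B \in D)
    & [set: 'I_m] \notin D].

Definition fD (m : nat) (D : {set {set 'I_m}}) (i : nat) : nat :=
  #|[set A in D | #|A| == i]|.

Definition bier_face (m : nat) (D : {set {set 'I_m}}) (p : {set 'I_m} * {set 'I_m}) : bool :=
  [&& p.1 \proper p.2, p.1 \in D & p.2 \notin D].

Definition bier_nverts (m : nat) (p : {set 'I_m} * {set 'I_m}) : nat :=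
  (#|p.1| + m - #|p.2|)%N.

Definition fBier (m : nat) (D : {set {set 'I_m}}) (j : nat) : nat :=
  #|[set p | bier_face D p & bier_nverts p == j]|.

Definition hBier (m : nat) (D : {set {set 'I_m}}) (i : nat) : int :=
  if (i <= m.-1)%N then
    \sum_(0 <= j < m) (-1) ^+ (i + j) * ('C(m.-1 - j, m.-1 - i))%:Z * (fBier D j)%:Z
  else 0.

Definition aug (m : nat) (D : {set {set 'I_m}}) : {set {set 'I_m.+1}} :=
  [set widen_ord (leqnSn m) @: (B : {set 'I_m}) | B in D].

From mathcomp Require Import all_boot all_order all_algebra zify.
Import GRing.Theory Num.Theory.

Set Implicit Arguments.
Unset Strict Implicit.
Unset Printing Implicit Defensive.

(* A face (B, C) of Bier(B_(n+1), Delta^aug) has B in Delta.  If n+1 is not in C,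
   it is a face of Bier(B_n, Delta) with the vertex n+1 added, which shifts f_j by
   one.  If n+1 is in C, then C minus n+1 is an arbitrary superset of B; counting
   these by |B| = k gives the extra term sum_k f_k(Delta) C(n-k, n-j) in f_j.  The
   h-transform turns the shift into h_(i-1), and by alternating binomial inversion
   it maps the f-vector j |-> C(n-k, n-j) to the indicator of i = k. *)

Lemma card_set_sum (T : finType) (P : pred T) : #|[set x | P x]| = \sum_x P x.
Proof.
by rewrite -sum1_card big_mkcond; apply: eq_bigr => x _; rewrite inE; case: (P x).
Qed.

Lemma card_set_pairs (T : finType) (P : T -> T -> bool) :
  #|[set p : T * T | P p.1 p.2]| = \sum_(x : T) \sum_(y : T) P x y.
Proof. by rewrite card_set_sum pair_big. Qed.

Section WidenSet.
Variable n : nat.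

Local Notation widen := (widen_ord (leqnSn n)).

Definition widen_set (C : {set 'I_n}) : {set 'I_n.+1} := widen @: C.
Definition widen_set_max (C : {set 'I_n}) : {set 'I_n.+1} := ord_max |: widen_set C.

Lemma widen_inj : injective widen.
Proof. by move=> x y /(congr1 val) /= /val_inj. Qed.

Lemma lift_max_widen (i : 'I_n) : lift ord_max i = widen i.
Proof. exact/val_inj/lift_max. Qed.

Lemma widen_set_inj : injective widen_set.
Proof. exact: imset_inj widen_inj. Qed.

Lemma card_widen_set C : #|widen_set C| = #|C|.
Proof. exact: card_imset widen_inj. Qed.

Lemma mem_widen_set C i : (widen i \in widen_set C) = (i \in C).
Proof. exact: mem_imset widen_inj. Qed.

Lemma max_notin_widen_set C : ord_max \notin widen_set C.
Proof.
by apply/imsetP => -[i _] /(congr1 val) /= /eqP; rewrite eq_sym (ltn_eqF (ltn_ord i)).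
Qed.

Lemma card_widen_set_max C : #|widen_set_max C| = #|C|.+1.
Proof. by rewrite cardsU1 max_notin_widen_set card_widen_set. Qed.

Lemma widen_setK C : widen @^-1: widen_set C = C.
Proof. by apply/setP => i; rewrite inE mem_widen_set. Qed.

Lemma widen_set_maxK C : widen @^-1: widen_set_max C = C.
Proof.
apply/setP => i; rewrite !inE mem_widen_set orb_idl // => /eqP.
by move/(congr1 val) => /= /eqP; rewrite (ltn_eqF (ltn_ord i)).
Qed.

Lemma preim_widenK (C : {set 'I_n.+1}) :
  (if ord_max \in C then widen_set_max else widen_set) (widen @^-1: C) = C.
Proof.
apply/setP => x; case: (unliftP ord_max x) => [i -> | ->].
  rewrite lift_max_widen; case: ifP => _; rewrite ?inE mem_widen_set ?inE //.
  by rewrite -lift_max_widen eq_sym eq_liftF.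
by case: ifPn => _; rewrite ?setU11 ?(negbTE (max_notin_widen_set _)).
Qed.

Lemma big_set_widen (R : Type) (idx : R) (op : Monoid.com_law idx)
    (F : {set 'I_n.+1} -> R) :
  \big[op/idx]_C F C
    = op (\big[op/idx]_C F (widen_set C)) (\big[op/idx]_C F (widen_set_max C)).
Proof.
rewrite (bigID (fun C : {set _} => ord_max \notin C)) /=.
rewrite (reindex_onto widen_set (fun C => widen @^-1: C)) => [|C]; last first.
  by rewrite -[RHS]preim_widenK => /negbTE ->.
rewrite (reindex_onto widen_set_max (fun C => widen @^-1: C)) => [|C]; last first.
  by rewrite -[RHS]preim_widenK => /negPn ->.
congr (op _ _); apply: eq_bigl => C /=.
  by rewrite max_notin_widen_set widen_setK eqxx.
by rewrite setU11 widen_set_maxK eqxx.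
Qed.

Lemma subset_widen_set B C : (widen_set B \subset widen_set C) = (B \subset C).
Proof.
apply/idP/idP => [/subsetP sBC | /(imsetS widen) //].
by apply/subsetP => i iB; rewrite -mem_widen_set sBC ?mem_widen_set.
Qed.

Lemma proper_widen_set B C : (widen_set B \proper widen_set C) = (B \proper C).
Proof. by rewrite !properE !subset_widen_set. Qed.

Lemma subset_widen_set_max B C : (widen_set B \subset widen_set_max C) = (B \subset C).
Proof.
rewrite -subset_widen_set -subDset (_ : widen_set B :\ ord_max = widen_set B) //.
by apply/setDidPl; rewrite disjoint_sym disjoints1 max_notin_widen_set.
Qed.

Lemma proper_widen_set_max B C : (widen_set B \proper widen_set_max C) = (B \subset C).
Proof.
rewrite properE subset_widen_set_max andb_idr // => _.
by apply: contraNN (max_notin_widen_set B) => /subsetP; apply; apply: setU11.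
Qed.

Lemma mem_widen_set_aug (D : {set {set 'I_n}}) C : (widen_set C \in aug D) = (C \in D).
Proof. exact: mem_imset widen_set_inj. Qed.

Lemma widen_set_max_notin_aug (D : {set {set 'I_n}}) C : widen_set_max C \notin aug D.
Proof.
apply/imsetP => -[B _] /setP /(_ ord_max).
by rewrite setU11 (negbTE (max_notin_widen_set B)).
Qed.

End WidenSet.

Lemma card_supsets_codim (T : finType) (B : {set T}) k :
  #|[set C : {set T} | B \subset C & #|~: C| == k]| = 'C(#|~: B|, k).
Proof.
rewrite -cards_draws -[RHS](card_imset _ (@setC_inj T)); apply: eq_card => C.
rewrite [in LHS]inE; apply/idP/imsetP => [/andP[sBC cCk] | [A] ].
  by exists (~: C); rewrite ?setCK // inE setCS sBC.
by rewrite inE => /andP[sAB cAk] ->; rewrite setCK -setCS setCK sAB.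
Qed.

Lemma leq_card_ord {n} (A : {pred 'I_n}) : #|A| <= n.
Proof. by have := max_card A; rewrite card_ord. Qed.

Lemma cardsC_ord n (A : {set 'I_n}) : #|~: A| = n - #|A|.
Proof. by have := cardsC A; rewrite card_ord; lia. Qed.

Lemma sum_supsets_nverts n (B : {set 'I_n}) j : j <= n ->
  \sum_(C : {set 'I_n}) ((B \subset C) && (#|B| + n - #|C| == j)) = 'C(n - #|B|, n - j).
Proof.
move=> le_jn; rewrite -card_set_sum.
have leBn := leq_card_ord B.
have [le_Bj | lt_jB] := leqP #|B| j; last first.
  rewrite bin_small; last by move: #|B| leBn lt_jB => b; lia.
  apply: eq_card0 => C; rewrite inE; apply/negP => /andP[_ /eqP].
  by have := leq_card_ord C; move: #|C| #|B| lt_jB => c b; lia.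
have -> : n - j = (n - #|B|) - (j - #|B|) by move: #|B| le_Bj => b; lia.
rewrite bin_sub; last by move: #|B| le_Bj => b; lia.
rewrite -cardsC_ord -card_supsets_codim.
apply: eq_card => C; rewrite !inE cardsC_ord; congr (_ && _).
by have := leq_card_ord C; move: #|C| #|B| le_Bj leBn => c b; lia.
Qed.

Lemma sum_by_card n (D : {set {set 'I_n}}) (phi : nat -> nat) :
  \sum_(B in D) phi #|B| = \sum_(k < n.+1) fD D k * phi k.
Proof.
rewrite (partition_big (fun B : {set 'I_n} => inord #|B| : 'I_n.+1) xpredT) //=.
apply: eq_bigr => k _; rewrite /fD -sum1_card big_distrl /=.
rewrite big_mkcond [RHS]big_mkcond /=.
apply: eq_bigr => B _; rewrite inE; case: (B \in D) => //=.
rewrite -(inj_eq val_inj) /= inordK ?ltnS ?leq_card_ord //.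
by case: eqP => // ->; rewrite mul1n.
Qed.

Lemma fBierE m (D : {set {set 'I_m}}) j :
  fBier D j = \sum_B \sum_C (bier_face D (B, C) && (bier_nverts (B, C) == j)).
Proof.
rewrite -(card_set_pairs (fun B C => bier_face D (B, C) && (bier_nverts (B, C) == j))).
by apply: eq_card => -[B C]; rewrite !inE.
Qed.

Section BierAug.
Variables (n : nat) (D : {set {set 'I_n}}).

Lemma bier_face_widen_max_fst (B : {set 'I_n}) (C : {set 'I_n.+1}) :
  bier_face (aug D) (widen_set_max B, C) = false.
Proof. by rewrite /bier_face /= (negbTE (widen_set_max_notin_aug _ _)) andbF. Qed.

Lemma bier_face_widen (B C : {set 'I_n}) :
  bier_face (aug D) (widen_set B, widen_set C) = bier_face D (B, C).
Proof. by rewrite /bier_face /= proper_widen_set !mem_widen_set_aug. Qed.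

Lemma bier_face_widen_max (B C : {set 'I_n}) :
  bier_face (aug D) (widen_set B, widen_set_max C) = (B \in D) && (B \subset C).
Proof.
rewrite /bier_face /= proper_widen_set_max mem_widen_set_aug.
by rewrite widen_set_max_notin_aug andbT andbC.
Qed.

Lemma bier_nverts_widen (B C : {set 'I_n}) :
  bier_nverts (widen_set B, widen_set C) = (bier_nverts (B, C)).+1.
Proof.
rewrite /bier_nverts /= !card_widen_set.
by have := leq_card_ord C; move: #|B| #|C| => b c; lia.
Qed.

Lemma bier_nverts_widen_max (B C : {set 'I_n}) :
  bier_nverts (widen_set B, widen_set_max C) = bier_nverts (B, C).
Proof. by rewrite /bier_nverts /= card_widen_set card_widen_set_max addnS. Qed.

Lemma fBier_aug j : j <= n ->
  fBier (aug D) j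
    = (if j is j'.+1 then fBier D j' else 0) + \sum_(k < n.+1) fD D k * 'C(n - k, n - j).
Proof.
move=> le_jn; rewrite fBierE big_set_widen /= [X in _ + X = _]big1 ?addn0 => [|B _]; last first.
  by apply: big1 => C _; rewrite bier_face_widen_max_fst.
under eq_bigr do rewrite big_set_widen.
rewrite big_split /=; congr (_ + _).
  under eq_bigr do under eq_bigr do rewrite bier_face_widen bier_nverts_widen.
  case: j le_jn => [|j] _; last by rewrite fBierE.
  by rewrite big1 // => B _; rewrite big1 // => C _; rewrite andbF.
under eq_bigr do under eq_bigr do rewrite bier_face_widen_max bier_nverts_widen_max -andbA.
rewrite -(sum_by_card D (fun k => 'C(n - k, n - j))) [RHS]big_mkcond; apply: eq_bigr => B _.
by case: (B \in D); [exact: sum_supsets_nverts | exact: big1].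
Qed.

End BierAug.

Local Open Scope ring_scope.

Definition h_transform (m : nat) (f : nat -> int) (i : nat) : int :=
  \sum_(j < m) (-1) ^+ (i + j) * 'C(m.-1 - j, m.-1 - i)%:Z * f j.

Lemma hBierE m (D : {set {set 'I_m}}) i : (i <= m.-1)%N ->
  hBier D i = h_transform m (fun j => (fBier D j)%:Z) i.
Proof. by move=> le_im; rewrite /hBier le_im big_mkord. Qed.

Lemma eq_h_transform m (f g : nat -> int) i :
  (forall j, (j < m)%N -> f j = g j) -> h_transform m f i = h_transform m g i.
Proof. by move=> efg; apply: eq_bigr => j _; rewrite efg. Qed.

Lemma h_transformD m (f g : nat -> int) i :
  h_transform m (fun j => f j + g j) i = h_transform m f i + h_transform m g i.
Proof. by rewrite -big_split; apply: eq_bigr => j _; rewrite mulrDr. Qed.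

Lemma h_transform_shift m (f : nat -> int) i :
  h_transform m.+1 (fun j => if j is j'.+1 then f j' else 0) i
    = if i is i'.+1 then h_transform m f i' else 0.
Proof.
rewrite /h_transform big_ord_recl mulr0 add0r; case: i => [|i].
  apply: big1 => j _; rewrite bin_small ?mulr0 ?mul0r //=.
  by rewrite subn0 subnS prednK ?leq_subr // subn_gt0.
apply: eq_bigr => j _; rewrite lift0 addSn addnS !exprS !mulN1r opprK /=.
by rewrite !subnS !predn_sub.
Qed.

Lemma coef_XaddC1_exp (R : nzRingType) (a b : nat) :
  (('X + 1) ^+ a : {poly R})`_b = 'C(a, b)%:R.
Proof.
rewrite exprD1n coef_sum; under eq_bigr do rewrite coefMn coefXn.
have [le_ba | lt_ab] := leqP b a; last first.
  by rewrite bin_small // big1 // => i _; rewrite gtn_eqF ?mul0rn // (leq_trans (ltn_ord i)).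
rewrite (bigD1 (@inord a b)) //= inordK // eqxx mulr1n big1 ?addr0 // => i ne_ib.
rewrite (_ : b == i = false) ?mul0rn //.
by apply: contraNF ne_ib => /eqP eb; apply/eqP/val_inj; rewrite /= inordK // eb.
Qed.

Lemma sum_sign_bin_mul (R : comNzRingType) (L M b : nat) : (M < L)%N ->
  \sum_(a < L) (-1) ^+ a * ('C(M, a) * 'C(a, b))%:R = (-1) ^+ b * (M == b)%:R :> R.
Proof.
move=> lt_ML; pose F a : R := (-1) ^+ a * ('C(M, a) * 'C(a, b))%:R.
have -> : \sum_(a < L) F a = \sum_(a < M.+1) F a.
  rewrite (big_ord_widen L F lt_ML) [RHS]big_mkcond; apply: eq_bigr => a _.
  by case: ltnP => // lt_Ma; rewrite /F bin_small ?mul0n ?mulr0.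
have := congr1 (fun p : {poly R} => p`_b) (exprD1n (- ('X + 1)) M).
have -> : - ('X + 1) + 1 = (-1) *: ('X : {poly R}) by rewrite scaleN1r opprD addrNK.
rewrite exprZn coefZ coefXn coef_sum eq_sym.
have -> : (-1) ^+ b * (M == b)%:R = (-1) ^+ M * (M == b)%:R :> R.
  by case: eqP => [-> | _]; rewrite ?mulr0.
move=> ->; apply: eq_bigr => a _.
by rewrite coefMn -scaleN1r exprZn coefZ coef_XaddC1_exp /F natrM mulr_natl mulrnAr.
Qed.

Lemma h_transform_bin N k i : (i <= N)%N -> (k <= N)%N ->
  h_transform N.+1 (fun j => 'C(N - k, N - j)%:Z) i = (k == i)%:Z.
Proof.
move=> le_iN le_kN; rewrite /h_transform /= (reindex_inj rev_ord_inj) /=.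
under eq_bigr => a _.
  have le_aN : (a <= N)%N by rewrite -ltnS.
  have -> : (-1) ^+ (i + (N - a)) = (-1) ^+ (N - i) * (-1) ^+ a :> int.
    rewrite -exprD -[LHS]signr_odd -[RHS]signr_odd !oddD !oddB //.
    by case: (odd i); case: (odd N); case: (odd a).
  rewrite subKn // -!mulrA -PoszM mulnC -natz.
over.
rewrite -big_distrr /= sum_sign_bin_mul; last by rewrite ltnS leq_subr.
rewrite signrMK -natz; congr (_%:R).
by apply/eqP/eqP; lia.
Qed.

Lemma h_transform_inv N (g : nat -> int) i : (i <= N)%N ->
  h_transform N.+1 (fun j => \sum_(k < N.+1) g k * 'C(N - k, N - j)%:Z) i = g i.
Proof.
move=> le_iN; rewrite /h_transform /=.
under eq_bigr do rewrite big_distrr.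
rewrite exchange_big (eq_bigr (fun k : 'I_N.+1 => if k == i :> nat then g k else 0)).
  by rewrite -big_mkcond big_ord1_eq ltnS le_iN.
move=> k _ /=; under eq_bigr do rewrite mulrCA.
have := h_transform_bin le_iN (leq_ord k); rewrite /h_transform /= => bin_ki.
by rewrite -big_distrr /= bin_ki; case: eqP; rewrite ?mulr1 ?mulr0.
Qed.

Theorem mainTheorem11 (n : nat) (D : {set {set 'I_n}}) :
  (2 <= n)%N -> is_proper_ideal D ->
  forall i : nat, (i <= n)%N ->
    hBier (aug D) i
    = (if i is i'.+1 then hBier D i' else 0) + (fD D i)%:Z.
Proof.
move=> _ _ i le_in.
have fBier_augZ j : (j < n.+1)%N -> (fBier (aug D) j)%:Z
    = (if j is j'.+1 then (fBier D j')%:Z else 0)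
      + \sum_(k < n.+1) (fD D k)%:Z * 'C(n - k, n - j)%:Z.
  rewrite ltnS => le_jn; rewrite fBier_aug // PoszD (big_morph Posz PoszD (erefl 0%:Z)).
  by under eq_bigr do rewrite PoszM; case: j le_jn.
rewrite hBierE // (eq_h_transform _ fBier_augZ) h_transformD h_transform_shift.
rewrite (h_transform_inv (fun k => (fD D k)%:Z)) //.
by case: i le_in => [|i] le_in; rewrite ?add0r // hBierE //; lia.
Qed.
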